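(* Let $k\geq 1$, $t\geq k$ and $\frac{1}{2}\leq p\leq 1$ be real numbers. Then for every real $x$ with $0\leq x\leq \frac{1}{2}$, $$(1+t)^x\geq p^x+\frac{(1+k)^x-p^x}{k^x}\,t^x .$$ *)

From Stdlib Require Import Reals.

From Stdlib Require Import Reals Lra Psatz.
From Coquelicot Require Import Rcomplements.
Open Scope R_scope.

(* Dividing by t^x and substituting s = 1/t, the claim says that
   G(s) = (1 + s)^x - p^x s^x ([rescaled_gap]) is nonincreasing on (0, 1].  Indeed
   G'(s) = x ((1 + s)^(x-1) - p^x s^(x-1)), and G'(s) <= 0 amounts to
   ((1 + s)/s)^(1-x) >= p^(-x), which holds because (1 + s)/s >= 2,
   1 - x >= x and 1/p <= 2. *)

Section RescaledGap.

Variables x p : R.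

Definition rescaled_gap (s : R) : R := Rpower (1 + s) x - Rpower p x * Rpower s x.

Lemma rescaled_gap_inv (u : R) : 0 < u ->
  rescaled_gap (/ u) = (Rpower (1 + u) x - Rpower p x) / Rpower u x.
Proof.
  intros Hu.
  assert (Hux : 0 < Rpower u x) by apply exp_pos.
  assert (Hu' : 0 < / u) by (apply Rinv_0_lt_compat; lra).
  assert (Hsplit : Rpower (1 + u) x = Rpower u x * Rpower (1 + / u) x).
  { rewrite Rpower_mult_distr by lra. f_equal; field; lra. }
  assert (Hinv : Rpower (/ u) x = / Rpower u x).
  { unfold Rpower. rewrite ln_Rinv, <- Ropp_mult_distr_r, exp_Ropp by lra. reflexivity. }
  unfold rescaled_gap.
  rewrite Hinv, Hsplit. field. lra.
Qed.

Lemma derivable_pt_lim_rescaled_gap (s : R) : 0 < s ->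
  derivable_pt_lim rescaled_gap s
    (x * Rpower (1 + s) (x - 1) - Rpower p x * (x * Rpower s (x - 1))).
Proof.
  intros Hs.
  apply (derivable_pt_lim_minus (fun s => Rpower (1 + s) x)
                                (fun s => Rpower p x * Rpower s x)).
  - replace (x * Rpower (1 + s) (x - 1)) with ((x * Rpower (1 + s) (x - 1)) * (0 + 1)) by ring.
    apply (derivable_pt_lim_comp (fun s => 1 + s) (fun u => Rpower u x)).
    + apply derivable_pt_lim_plus; [apply derivable_pt_lim_const | apply derivable_pt_lim_id].
    + apply derivable_pt_lim_power; lra.
  - apply (derivable_pt_lim_scal (fun s => Rpower s x)).
    apply derivable_pt_lim_power; lra.
Qed.

Hypotheses (hx : 0 <= x <= 1/2) (hp : 1/2 <= p).

Lemma rescaled_gap_derivative_nonpos (s : R) : 0 < s <= 1 ->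
  x * Rpower (1 + s) (x - 1) - Rpower p x * (x * Rpower s (x - 1)) <= 0.
Proof.
  intros Hs.
  assert (Hpow : Rpower (1 + s) (x - 1) <= Rpower p x * Rpower s (x - 1)).
  { assert (Hln2 : 0 < ln 2) by (rewrite <- ln_1; apply ln_increasing; lra).
    assert (Hratio : ln 2 <= ln (1 + s) - ln s).
    { rewrite <- ln_div by lra. apply ln_le; [lra |].
      apply Rmult_le_reg_r with s; [lra |]. field_simplify; lra. }
    assert (Hinv : - ln 2 <= ln p).
    { rewrite <- ln_Rinv by lra. apply ln_le; lra. }
    assert (Hexponent : (x - 1) * ln (1 + s) <= x * ln p + (x - 1) * ln s) by nra.
    unfold Rpower; rewrite <- exp_plus.
    destruct Hexponent as [Hlt | ->]; [apply Rlt_le, exp_increasing, Hlt | apply Rle_refl]. }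
  nra.
Qed.

Lemma rescaled_gap_antitone (s s' : R) : 0 < s <= s' -> s' <= 1 ->
  rescaled_gap s' <= rescaled_gap s.
Proof.
  intros Hs Hs'.
  destruct (Req_dec s s') as [<- | Hne]; [lra |].
  destruct (MVT_cor2 rescaled_gap _ s s' ltac:(lra)
              (fun c Hc => derivable_pt_lim_rescaled_gap c ltac:(lra)))
    as [c [Hmvt Hc]].
  pose proof (rescaled_gap_derivative_nonpos c ltac:(lra)).
  nra.
Qed.

End RescaledGap.

Theorem lemma1 (k t p x : R)
  (hk : 1 <= k) (ht : k <= t) (hp1 : 1/2 <= p) (hp2 : p <= 1)
  (hx1 : 0 <= x) (hx2 : x <= 1/2) :
  Rpower (1 + t) x >=
    Rpower p x + (Rpower (1 + k) x - Rpower p x) / Rpower k x * Rpower t x.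
Proof.
  assert (Hrange : 0 < / t <= / k) by (split; [apply Rinv_0_lt_compat | apply Rinv_le_contravar]; lra).
  assert (Hk : / k <= 1) by (rewrite <- Rinv_1; apply Rinv_le_contravar; lra).
  pose proof (rescaled_gap_antitone x p ltac:(lra) hp1 _ _ Hrange Hk) as Hmono.
  rewrite !rescaled_gap_inv in Hmono by lra.
  assert (Htx : 0 < Rpower t x) by apply exp_pos.
  apply Rmult_le_compat_r with (r := Rpower t x) in Hmono; [| lra].
  replace ((Rpower (1 + t) x - Rpower p x) / Rpower t x * Rpower t x)
    with (Rpower (1 + t) x - Rpower p x) in Hmono by (field; lra).
  lra.
Qed.
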